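(* Let $\alpha\in(0,\frac{\pi}{2}]$ and let $S$ be a finite set of line segments in the plane such that any two segments of $S$ that cross do so at angle $\alpha$. If $\frac{\pi}{\alpha}$ is irrational, or $\frac{\pi}{\alpha}=\frac{p}{q}$ with $\gcd(p,q)=1$ and $p$ even, then there exists a subset $S'\subset S$ of pairwise noncrossing segments with $|S'|\geq\frac12|S|$. Otherwise $\frac{\pi}{\alpha}=\frac{p}{q}$ with $\gcd(p,q)=1$ and $p=2k+1$ for some $k\in\mathbb{N}$, and then there exists a subset $S'\subset S$ of pairwise noncrossing segments with $|S'|\geq\frac{k}{2k+1}|S|$. This holds under either of the following two notions of crossing.
   Context: Segments in $S$ may overlap (intersect in a segment of positive length). Standard notion: two segments cross if they intersect in a single point lying in the relative interior of both. Relaxed notion: given $S$ and a set $V$ of segment endpoints, two segments of $S$ cross if they intersect in a single point that is not in $V$. Two segments cross at angle $\alpha$ if the lines containing them meet at angle $\alpha$ (equivalently $\pi-\alpha$). *)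

From HB Require Import structures.
From mathcomp Require Import all_boot all_order all_algebra.
From mathcomp Require Import all_classical all_reals.
From mathcomp Require Import trigo.
Set Implicit Arguments. Unset Strict Implicit. Unset Printing Implicit Defensive.
Import Order.TTheory GRing.Theory Num.Theory.
Local Open Scope ring_scope.
Local Open Scope classical_set_scope.

Section Defs.
Variable R : realType.

Definition pt := (R * R)%type.
Definition segment := (pt * pt)%type.

Definition lerp (a b : pt) (t : R) : pt :=
  (a.1 + t * (b.1 - a.1), a.2 + t * (b.2 - a.2)).

Definition seg_set (s : segment) : set pt :=
  [set p | exists t : R, 0 <= t <= 1 /\ p = lerp s.1 s.2 t].

Definition seg_relint (s : segment) : set pt :=
  [set p | exists t : R, 0 < t < 1 /\ p = lerp s.1 s.2 t].

Definition std_cross (s1 s2 : segment) : Prop :=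
  exists p : pt, seg_set s1 `&` seg_set s2 = [set p] /\
                 seg_relint s1 p /\ seg_relint s2 p.

Definition relaxed_cross (V : set pt) (s1 s2 : segment) : Prop :=
  exists p : pt, seg_set s1 `&` seg_set s2 = [set p] /\ ~ V p.

Definition dir (s : segment) : pt := (s.2.1 - s.1.1, s.2.2 - s.1.2).
Definition dot (u v : pt) : R := u.1 * v.1 + u.2 * v.2.
Definition vnorm (u : pt) : R := Num.sqrt (dot u u).

(* angle in [0, pi/2] between the lines containing the two segments *)
Definition line_angle (s1 s2 : segment) : R :=
  acos (`| dot (dir s1) (dir s2) | / (vnorm (dir s1) * vnorm (dir s2))).

Definition cross_at_angle (alpha : R) (s1 s2 : segment) : Prop :=
  line_angle s1 s2 = alpha.

End Defs.

(* Write the direction of segment i as c (cos phi_i, sin phi_i) with phi_i in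
   [0, pi]; if segments i and j cross at angle alpha then
   phi_j - phi_i = +-alpha + f pi for some integer f.  Suppose every integer
   relation a alpha + b pi = 0 has m | a: this holds with m = 2 when pi/alpha
   is irrational or has an even reduced numerator, and with m = p = 2k+1 when
   pi/alpha = p/q in lowest terms.  Fix a representative in each class of the
   phi_i modulo Z alpha + Z pi and label segment i by the alpha-coefficient of
   phi_i minus its representative, read in Z/m; this is well defined, and
   crossing segments get consecutive labels.  Odd residues are never
   consecutive in the cycle Z/m, so for every shift s the segments whose label
   minus s is odd are pairwise noncrossing, and averaging over the m shifts
   yields one with at least floor(m/2) n / m segments. *)

From HB Require Import structures.
From mathcomp Require Import all_boot all_order all_algebra.
From mathcomp Require Import all_classical all_reals.
From mathcomp Require Import trigo.
From mathcomp Require Import ring lra.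
Set Implicit Arguments.
Unset Strict Implicit.
Unset Printing Implicit Defensive.

Import Order.TTheory GRing.Theory Num.Theory.
Local Open Scope ring_scope.

Lemma exists_ge_mean (T : finType) (f : T -> nat) (t0 : T) :
  exists s, (\sum_t f t <= #|T| * f s)%N.
Proof.
have [s _ fs_max] := @arg_maxnP T t0 predT f isT; exists s.
by rewrite -sum_nat_const; apply: leq_sum => t _; apply: fs_max.
Qed.

Lemma sum_card_shift (G : finZmodType) (T : finType) (l : T -> G) (P : {set G}) :
  (\sum_(s : G) #|[set i | (l i - s)%R \in P]| = #|T| * #|P|)%N.
Proof.
under eq_bigr do rewrite -sum1dep_card big_mkcond /=.
rewrite exchange_big /= -sum_nat_const.
apply: eq_bigr => i _; rewrite -big_mkcond -sum1_card (reindex_inj (subrI (l i))) /=.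
by apply: eq_bigl => s; rewrite opprB addrC subrK.
Qed.

Lemma sum_odd_below (N : nat) : (\sum_(0 <= t < N) odd t)%N = N./2.
Proof.
elim: N => [|N IHN]; first by rewrite big_geq.
by rewrite big_nat_recr //= IHN uphalf_half addnC.
Qed.

Lemma card_odd_Zp (m : nat) : #|[set t : 'I_m.+2 | odd t]| = m.+2./2.
Proof.
rewrite -sum1dep_card big_mkcond /= -(big_mkord xpredT (fun t => odd t : nat)).
by rewrite sum_odd_below.
Qed.

Lemma odd_Zp_add1 (m : nat) (t : 'I_m.+2) : odd t -> ~~ odd (t + 1)%R.
Proof.
move=> odd_t; rewrite /= (modn_small (isT : 1 < m.+2)%N) addn1.
have [ltN | geN] := ltnP t.+1 m.+2; first by rewrite modn_small //= odd_t.
have -> : t.+1 = m.+2 by apply/eqP; rewrite eqn_leq geN ltn_ord.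
by rewrite modnn.
Qed.

Lemma exists_large_independent (T : finType) (m : nat) (l : T -> 'I_m.+2)
    (adj : T -> T -> Prop) :
  (forall i j, i != j -> adj i j -> l j = l i + 1 \/ l i = l j + 1) ->
  exists I : {set T}, (forall i j, i \in I -> j \in I -> i != j -> ~ adj i j) /\
    (#|T| * m.+2./2 <= #|I| * m.+2)%N.
Proof.
move=> adj_succ; pose P := [set t : 'I_m.+2 | odd t].
pose I s := [set i | (l i - s)%R \in P].
have [s mean_le] := exists_ge_mean (fun s : 'I_m.+2 => #|I s|) 0.
exists (I s); split.
  have no_succ i j : i \in I s -> j \in I s -> l j <> l i + 1.
    rewrite !inE => odd_i + lj; rewrite lj addrAC.
    by rewrite (negPf (odd_Zp_add1 odd_i)).
  by move=> i j Ii Ij ij /(adj_succ _ _ ij) [/(no_succ _ _ Ii Ij) | /(no_succ _ _ Ij Ii)].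
rewrite sum_card_shift card_odd_Zp card_ord in mean_le.
by rewrite [(#|I s| * _)%N]mulnC.
Qed.

Lemma exists_class_repr (T : choiceType) (E : T -> T -> Prop) :
  (forall i, E i i) -> (forall i j, E i j -> E j i) ->
  (forall i j k, E i j -> E j k -> E i k) ->
  exists r : T -> T, (forall i, E (r i) i) /\ (forall i j, E i j -> r i = r j).
Proof.
move=> E_refl E_sym E_trans.
have inhabited i : exists j, `[< E j i >] by exists i; apply/asboolP.
exists (fun i => xchoose (inhabited i)); split=> [i | i j Eij].
  exact/asboolP/(xchooseP (inhabited i)).
apply: eq_xchoose => k; apply/asboolP/asboolP => [Eki | Ekj].
  exact: E_trans Eij.
exact: E_trans (E_sym _ _ Eij).
Qed.

Lemma intr_Zp_eq0 (m : nat) (z : int) : (m.+2%:Z %| z)%Z -> (z%:~R : 'I_m.+2) = 0.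
Proof. by move=> /dvdzP[c ->]; rewrite intrM -pmulrn (pchar_Zp (isT : 1 < m.+2)%N) mulr0. Qed.

Section CoefficientLabels.
Variables (V : zmodType) (x y : V) (m : nat).
Hypothesis relation_dvd : forall a b : int, x *~ a + y *~ b = 0 -> (m.+2%:Z %| a)%Z.

Let comb a b := x *~ a + y *~ b.

Let combD a b a' b' : comb (a + a') (b + b') = comb a b + comb a' b'.
Proof. by rewrite /comb !mulrzDr addrACA. Qed.

Let combN a b : comb (- a) (- b) = - comb a b.
Proof. by rewrite /comb !mulrNz opprD. Qed.

Lemma exists_coefficient_label (T : choiceType) (phi : T -> V) :
  exists l : T -> 'I_m.+2, forall i j (a b : int),
    phi j - phi i = x *~ a + y *~ b -> l j = l i + a%:~R.
Proof.
pose E i j := exists a b : int, phi j - phi i = comb a b.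
have E_refl i : E i i by exists 0, 0; rewrite subrr /comb !mulr0z addr0.
have E_sym i j : E i j -> E j i.
  by case=> a [b e]; exists (- a), (- b); rewrite combN -e opprB.
have E_trans i j k : E i j -> E j k -> E i k.
  case=> a [b e] [c [d e']]; exists (a + c), (b + d).
  by rewrite combD -e -e' [RHS]addrC subrKA.
have [r [E_r r_eq]] := exists_class_repr E_refl E_sym E_trans.
have [c E_c] := choice (fun i => E_r i).
have [d E_d] := choice (fun i => E_c i).
exists (fun i => (c i)%:~R) => i j a b; rewrite -/(comb a b) => e.
have Eij : E i j by exists a, b.
have rel0 : comb (c j - c i - a) (d j - d i - b) = 0.
  rewrite !combD !combN -E_d -E_d -e (r_eq _ _ Eij).
  by rewrite opprB subrKA subrr.
have := intr_Zp_eq0 (relation_dvd rel0); rewrite !intrB => /eqP.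
by rewrite -addrA -opprD subr_eq0 => /eqP.
Qed.

End CoefficientLabels.

Lemma relation_dvd_num (R : numFieldType) (x y : R) (p q : nat) :
  x != 0 -> (0 < q)%N -> coprime p q -> y / x = p%:R / q%:R ->
  forall a b : int, x *~ a + y *~ b = 0 -> (p%:Z %| a)%Z.
Proof.
move=> x0 q_gt0 cop_pq yx a b rel.
have q0 : q%:R != 0 :> R by rewrite pnatr_eq0 -lt0n.
have y_def : y = x * (p%:R / q%:R) by rewrite -yx mulrC divfK.
have : ((a * q%:Z + b * p%:Z)%:~R : R) = 0.
  apply: (mulIf (mulf_neq0 x0 (invr_neq0 q0))); rewrite mul0r -[RHS]rel y_def.
  by rewrite intrD !intrM; field.
move/eqP; rewrite intr_eq0 addr_eq0 => /eqP aq_eq.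
by rewrite -(@Gauss_dvdzl _ _ q) ?coprimezE // aq_eq rpredN dvdz_mull.
Qed.

Lemma coprime_divn_gcd (m n : nat) :
  (0 < n)%N -> coprime (m %/ gcdn m n) (n %/ gcdn m n).
Proof.
move=> n_gt0; have g_gt0 : (0 < gcdn m n)%N by rewrite gcdn_gt0 n_gt0 orbT.
by rewrite /coprime -(eqn_pmul2r g_gt0) mul1n muln_gcdl !divnK ?dvdn_gcdl ?dvdn_gcdr.
Qed.

Lemma exists_coprime_fraction (R : numFieldType) (m n : nat) : (0 < n)%N ->
  exists p q : nat, [/\ (0 < q)%N, coprime p q & m%:R / n%:R = p%:R / q%:R :> R].
Proof.
move=> n_gt0; set g := gcdn m n.
have g_gt0 : (0 < g)%N by rewrite gcdn_gt0 n_gt0 orbT.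
exists (m %/ g)%N, (n %/ g)%N; split; last 1 first.
- have -> : (m%:R : R) = (m %/ g)%:R * g%:R by rewrite -natrM divnK ?dvdn_gcdl.
  have -> : (n%:R : R) = (n %/ g)%:R * g%:R by rewrite -natrM divnK ?dvdn_gcdr.
  by rewrite -mulf_div divff ?mulr1 // pnatr_eq0 -lt0n.
- by rewrite divn_gt0 // dvdn_leq ?dvdn_gcdr.
- exact: coprime_divn_gcd.
Qed.

Lemma exists_coprime_ratio (R : realFieldType) (x y : R) (a b : int) :
  0 < x -> 0 < y -> a != 0 -> x *~ a + y *~ b = 0 ->
  exists p q : nat, [/\ (0 < q)%N, coprime p q & y / x = p%:R / q%:R].
Proof.
move=> x_gt0 y_gt0 a0 rel.
have x0 : x != 0 by rewrite gt_eqF.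
have b0 : (b%:~R : R) != 0.
  rewrite intr_eq0; apply: contraNneq a0 => b0; move: rel.
  by rewrite b0 mulr0z addr0 => /eqP; rewrite mulrz_eq0 (negPf x0) orbF.
have yb : y * b%:~R = - (x * a%:~R) by apply/eqP; rewrite -addr_eq0 addrC !mulrzr rel.
have yx : y / x = `|a|%:R / `|b|%:R.
  rewrite -(gtr0_norm (divr_gt0 y_gt0 x_gt0)) -[y](mulfK b0) yb.
  rewrite !natr_absz !intr_norm -normf_div -normrN; congr `|_|.
  by field; rewrite b0 x0.
rewrite yx; apply: exists_coprime_fraction.
by rewrite absz_gt0 -(intr_eq0 R).
Qed.

Lemma relation_dvd_even (R : realFieldType) (x y : R) : 0 < x -> 0 < y ->
  (forall p q : nat, (0 < q)%N -> coprime p q -> y / x = p%:R / q%:R -> ~~ odd p) ->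
  forall a b : int, x *~ a + y *~ b = 0 -> (2 %| a)%Z.
Proof.
move=> x_gt0 y_gt0 even_num a b rel; have [-> | a0] := eqVneq a 0; first exact: dvdz0.
have [p [q [q_gt0 cop_pq yx]]] := exists_coprime_ratio x_gt0 y_gt0 a0 rel.
apply: dvdz_trans (relation_dvd_num (lt0r_neq0 x_gt0) q_gt0 cop_pq yx rel).
by rewrite dvdzE /= dvdn2 (even_num p q).
Qed.

Lemma ler_ratio_mul (R : numFieldType) (n c k d : nat) :
  (0 < d)%N -> (n * k <= c * d)%N -> k%:R / d%:R * n%:R <= c%:R :> R.
Proof.
move=> d_gt0 le_nk_cd; rewrite mulrAC ler_pdivrMr ?ltr0n //.
by rewrite -!natrM ler_nat mulnC.
Qed.

Section Directions.
Variable R : realType.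

Definition dir_angle (u : pt R) (phi : R) :=
  exists2 c : R, c != 0 & u = (c * cos phi, c * sin phi).

Lemma dir_angle_exists_ge0 (x y : R) : 0 <= y -> (x, y) != (0, 0) ->
  exists phi, 0 <= phi <= pi /\ dir_angle (x, y) phi.
Proof.
move=> y_ge0 xy0.
have r2_gt0 : 0 < x ^+ 2 + y ^+ 2.
  rewrite lt0r addr_ge0 ?sqr_ge0 // andbT paddr_eq0 ?sqr_ge0 // !sqrf_eq0.
  by rewrite -xpair_eqE.
set r := Num.sqrt (x ^+ 2 + y ^+ 2).
have r_gt0 : 0 < r by rewrite sqrtr_gt0.
have r2 : r ^+ 2 = x ^+ 2 + y ^+ 2 by rewrite sqr_sqrtr // ltW.
have xr_bound : -1 <= x / r <= 1.
  by rewrite ler_pdivlMr // ler_pdivrMr //; apply/andP; split; nra.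
exists (acos (x / r)); split; first by rewrite acos_ge0 // acos_lepi.
exists r; first by rewrite gt_eqF.
rewrite acosK ?in_itv // mulrC divfK ?gt_eqF //; congr (_, _).
rewrite sin_acos //.
have s_ge0 : 0 <= 1 - (x / r) ^+ 2 by rewrite subr_ge0; nra.
apply/eqP; rewrite eq_sym -(@eqrXn2 _ 2) ?mulr_ge0 ?sqrtr_ge0 ?(ltW r_gt0) //.
rewrite exprMn (sqr_sqrtr s_ge0) expr_div_n r2; apply/eqP; field; exact: lt0r_neq0.
Qed.

Lemma dir_angle_exists (u : pt R) :
  u != (0, 0) -> exists phi, 0 <= phi <= pi /\ dir_angle u phi.
Proof.
case: u => x y xy0; have [y_ge0 | y_lt0] := leP 0 y; first exact: dir_angle_exists_ge0.
have [||phi [phi_range [c c0 [ex ey]]]] := @dir_angle_exists_ge0 (- x) (- y).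
- by rewrite oppr_ge0 ltW.
- by rewrite xpair_eqE !oppr_eq0 -xpair_eqE.
exists phi; split => //; exists (- c); first by rewrite oppr_eq0.
by rewrite !mulNr -ex -ey !opprK.
Qed.

Lemma line_angle_dir_angle (s1 s2 : segment R) (phi1 phi2 : R) :
  dir_angle (dir s1) phi1 -> dir_angle (dir s2) phi2 ->
  line_angle s1 s2 = acos `|cos (phi2 - phi1)|.
Proof.
rewrite /line_angle => -[c1 c1_0 ->] [c2 c2_0 ->]; rewrite /vnorm /dot /=.
have sqr_polar c phi : c * cos phi * (c * cos phi) + c * sin phi * (c * sin phi) = c ^+ 2.
  by rewrite -[RHS]mulr1 -(cos2Dsin2 phi); ring.
rewrite !sqr_polar !sqrtr_sqr -normrM; congr acos.
have -> : c1 * cos phi1 * (c2 * cos phi2) + c1 * sin phi1 * (c2 * sin phi2)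
    = c1 * c2 * cos (phi2 - phi1) by rewrite cosB; ring.
by rewrite !normrM mulrAC mulfV ?mul1r // mulf_neq0 // normr_eq0.
Qed.

Lemma acos_norm_cos (t : R) : -pi <= t <= pi ->
  acos `|cos t| = `|t| \/ acos `|cos t| = pi - `|t|.
Proof.
move=> t_range; have t_in : `|t| \in `[0, pi] by rewrite in_itv /= normr_ge0 ler_norml.
have cos_bound : -1 <= cos `|t| <= 1 by rewrite -ler_norml cos_max.
rewrite -cos_norm; have [cos_ge0 | cos_lt0] := leP 0 (cos `|t|).
  by left; rewrite ger0_norm // cosK.
by right; rewrite ltr0_norm // acosN // cosK.
Qed.

Lemma acos_norm_cos_eq (t : R) : -pi <= t <= pi ->
  exists e f : int, (e = 1 \/ e = -1) /\ t = acos `|cos t| *~ e + pi *~ f.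
Proof.
move=> t_range; have [|] := acos_norm_cos t_range => ->; have [t_ge0 | t_lt0] := leP 0 t.
- by exists 1, 0; split; [left | rewrite ger0_norm // mulr1z mulr0z addr0].
- by exists (-1), 0; split; [right | rewrite ltr0_norm // mulrN1z mulr0z addr0 opprK].
- by exists (-1), 1; split; [right | rewrite ger0_norm // mulrN1z mulr1z opprB subrK].
- by exists 1, (-1); split; [left | rewrite ltr0_norm // mulr1z mulrN1z opprK [pi + t]addrC addrK].
Qed.

Lemma dir_neq0 (s : segment R) : s.1 != s.2 -> dir s != (0, 0).
Proof.
case: s => [[x1 y1] [x2 y2]]; apply: contra.
by rewrite /dir /= xpair_eqE !subr_eq0 => /andP[/eqP -> /eqP ->].
Qed.

Lemma dir_angle_diff (s1 s2 : segment R) (phi1 phi2 : R) :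
  0 <= phi1 <= pi -> 0 <= phi2 <= pi ->
  dir_angle (dir s1) phi1 -> dir_angle (dir s2) phi2 ->
  exists e f : int, (e = 1 \/ e = -1) /\ phi2 - phi1 = line_angle s1 s2 *~ e + pi *~ f.
Proof.
move=> /andP[? ?] /andP[? ?] d1 d2; rewrite (line_angle_dir_angle d1 d2).
by apply: acos_norm_cos_eq; apply/andP; split; lra.
Qed.

End Directions.

Lemma exists_noncrossing_subset (R : realType) (alpha : R) (T : finType)
    (S : T -> segment R) (cross : segment R -> segment R -> Prop) :
  (forall i, (S i).1 != (S i).2) ->
  (forall i j, i != j -> cross (S i) (S j) -> cross_at_angle alpha (S i) (S j)) ->
  forall m : nat, (forall a b : int, alpha *~ a + pi *~ b = 0 -> (m.+2%:Z %| a)%Z) ->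
  exists I : {set T}, (forall i j, i \in I -> j \in I -> i != j -> ~ cross (S i) (S j))
    /\ (#|T| * m.+2./2 <= #|I| * m.+2)%N.
Proof.
move=> nondeg cross_alpha m rel_dvd.
have [phi phi_dir] := choice (fun i => dir_angle_exists (dir_neq0 (nondeg i))).
have phi_cross i j : i != j -> cross (S i) (S j) ->
    exists e f : int, (e = 1 \/ e = -1) /\ phi j - phi i = alpha *~ e + pi *~ f.
  move=> ij /(cross_alpha _ _ ij) <-.
  by have [[? ?] [? ?]] := (phi_dir i, phi_dir j); apply: dir_angle_diff.
have [l l_diff] := exists_coefficient_label rel_dvd phi.
apply: (exists_large_independent (l := l)).
move=> i j ij /(phi_cross _ _ ij) [e [f [[] -> /l_diff ->]]]; first by left.
by right; rewrite subrK.
Qed.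

Local Open Scope classical_set_scope.

Theorem lemma15 (R : realType) (alpha : R) (n : nat) (S : 'I_n -> segment R)
  (cross : segment R -> segment R -> Prop) :
  0 < alpha <= pi / 2 ->
  (* S is a finite set of (nondegenerate) segments, listed without repetition *)
  (forall i, (S i).1 != (S i).2) ->
  (forall i j, seg_set (S i) = seg_set (S j) -> i = j) ->
  (* the crossing notion: standard, or relaxed w.r.t. a set V of endpoints of S *)
  (cross = @std_cross R \/
   exists V : set (pt R),
     V `<=` [set p | exists i, p = (S i).1 \/ p = (S i).2] /\
     cross = relaxed_cross V) ->
  (* any two segments of S that cross do so at angle alpha *)
  (forall i j, i != j -> cross (S i) (S j) -> cross_at_angle alpha (S i) (S j)) ->
  ((forall p q : nat, (0 < q)%N -> coprime p q ->
       pi / alpha = p%:R / q%:R -> ~~ odd p) ->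
   exists I : {set 'I_n},
     (forall i j, i \in I -> j \in I -> i != j -> ~ cross (S i) (S j)) /\
     (#|I|%:R >= 2^-1 * n%:R :> R))
  /\
  (forall k q : nat, (0 < q)%N -> coprime k.*2.+1 q ->
       pi / alpha = k.*2.+1%:R / q%:R ->
   exists I : {set 'I_n},
     (forall i j, i \in I -> j \in I -> i != j -> ~ cross (S i) (S j)) /\
     (#|I|%:R >= k%:R / k.*2.+1%:R * n%:R :> R)).
Proof.
move=> /andP[alpha_gt0 _] nondeg _ _ cross_alpha.
have noncrossing := exists_noncrossing_subset nondeg cross_alpha.
split=> [even_num | k q q_gt0 cop_kq pi_alpha].
  have := noncrossing 0%N (relation_dvd_even alpha_gt0 (@pi_gt0 R) even_num).
  move=> [I [? card_I]]; exists I; split=> //.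
  by rewrite card_ord in card_I; rewrite -div1r (@ler_ratio_mul _ _ _ 1 2).
case: k cop_kq pi_alpha => [|k] cop_kq pi_alpha.
  exists finset.set0; split=> [i j | ]; first by rewrite inE.
  by rewrite cards0 !mul0r.
have := noncrossing k.*2.+1 (relation_dvd_num (lt0r_neq0 alpha_gt0) q_gt0 cop_kq pi_alpha).
move=> [I [? card_I]]; exists I; split=> //; apply: ler_ratio_mul => //.
have half_eq : (k.*2.+3)./2 = k.+1 by exact: half_bit_double k.+1 true.
by rewrite half_eq card_ord in card_I.
Qed.
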